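(* Let $\varepsilon,\delta\in(0,1)$ and $\alpha\ge1$. There is a one-pass streaming algorithm that, on any strict turnstile stream on $[n]$ with frequency vector $f$ satisfying the $L_1$ $\alpha$-property, outputs a $(1\pm\varepsilon)$-approximation of $\|f\|_1$ with probability at least $1-\delta$, using $O(\log(\alpha/\varepsilon)+\log(1/\delta)+\log\log n)$ bits of space.
   Context: A data stream on universe $[n]$ is a sequence of $m$ updates $(i_t,\Delta_t)\in[n]\times\{-M,\dots,M\}$; the frequency vector $f\in\mathbb{R}^n$ starts at $0$ and update $(i_t,\Delta_t)$ adds $\Delta_t$ to $f_{i_t}$. It is assumed that $\log(mM)=O(\log n)$. A strict turnstile stream is one in which updates may be negative but every coordinate of the frequency vector is non-negative at all times. The insertion vector $I$ is the frequency vector of the substream of positive updates and the deletion vector $D$ is the entrywise absolute value of the frequency vector of the substream of negative updates, so $f=I-D$. The stream has the $L_1$ $\alpha$-property if $\|I+D\|_1\le\alpha\|f\|_1$. Space is measured in bits. *)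

From Stdlib Require Import Reals.
From mathcomp Require Import all_boot all_order all_algebra.
From mathcomp Require Import Rstruct.
Set Implicit Arguments. Unset Strict Implicit. Unset Printing Implicit Defensive.
Import Order.TTheory GRing.Theory Num.Theory.
Local Open Scope ring_scope.

Definition update (n : nat) := ('I_n * int)%type.

Definition freq n (s : seq (update n)) (i : 'I_n) : int :=
  \sum_(u <- s | u.1 == i) u.2.

Definition insv n (s : seq (update n)) (i : 'I_n) : int :=
  \sum_(u <- s | (u.1 == i) && (0 < u.2)) u.2.

Definition delv n (s : seq (update n)) (i : 'I_n) : int :=
  `| \sum_(u <- s | (u.1 == i) && (u.2 < 0)) u.2 |.

Definition l1norm n (v : 'I_n -> int) : R := \sum_(i < n) (`|v i|)%:~R.

Definition strict_turnstile n (s : seq (update n)) : Prop :=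
  forall k (i : 'I_n), 0 <= freq (take k s) i.

Definition L1_alpha_property n (alpha : R) (s : seq (update n)) : Prop :=
  l1norm (fun i => insv s i + delv s i) <= alpha * l1norm (freq s).

(* A one-pass randomized streaming algorithm on universe [n] with k memory
   states (i.e. log2 k bits of space): a random initial state, a randomized
   transition on each update (fresh coins at each step; any randomness to be
   reused must be stored in the state), and an output function. *)
Record stream_alg (n k : nat) := StreamAlg {
  sa_init : 'I_k -> R;
  sa_step : update n -> 'I_k -> 'I_k -> R;   (* sa_step u s s' = P(s -> s' on u) *)
  sa_out  : 'I_k -> R
}.

Definition is_distr k (d : 'I_k -> R) : Prop :=
  (forall s, 0 <= d s) /\ \sum_(s < k) d s = 1.

Definition valid_alg n k (A : stream_alg n k) : Prop :=
  is_distr (sa_init A) /\ forall u s, is_distr (sa_step A u s).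

Definition run_distr n k (A : stream_alg n k) (s : seq (update n)) : 'I_k -> R :=
  foldl (fun (d : 'I_k -> R) u => fun t => \sum_(r < k) d r * sa_step A u r t)
        (sa_init A) s.

Definition success_prob n k (A : stream_alg n k) (eps : R) (s : seq (update n)) : R :=
  let L := l1norm (freq s) in
  \sum_(t < k | ((1 - eps) * L <= sa_out A t) && (sa_out A t <= (1 + eps) * L))
     run_distr A s t.

Definition log2 (x : R) : R := ln x / ln 2.

(* Run two Morris counters with base 1 + 1/r: one is fed the total insertion mass
   P = ||I||_1 and the other the total deletion mass N = ||D||_1 (an update (i, D)
   is |D| unit increments of one of them); output the difference of their estimates.
   A counter at level c estimates ((1 + a)^c - 1)/a and moves to c + 1 with
   probability (1 + a)^-c, so after x increments its estimate has mean x and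
   variance at most a x^2.  In a strict turnstile stream ||f||_1 = P - N, and the
   alpha-property gives P + N <= alpha ||f||_1; hence by Chebyshev, with
   r ~ alpha^2 / (eps^2 delta), both counters are within relative error eps/alpha
   with probability 1 - delta, and then the difference is within eps ||f||_1.
   Capped at r (K + 1) (floor(log2 n) + 1), the counters never saturate on streams
   of mass at most n^K, and the (cap + 1)^2 states take
   O(log(alpha/eps) + log(1/delta) + log log n) bits. *)

From Stdlib Require Import Reals FunctionalExtensionality.
From mathcomp Require Import all_boot all_order all_algebra.
From mathcomp Require Import Rstruct.
From mathcomp Require Import ring lra zify.
Import Order.TTheory GRing.Theory Num.Theory.
Local Open Scope ring_scope.

Section MarkovKernels.
Context {S : finType}.
Implicit Types (d f g : S -> R) (W : S -> S -> R).

Definition distr d := (forall t, 0 <= d t) /\ \sum_t d t = 1.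
Definition stochastic W := forall r, distr (W r).
Definition kstep W d : S -> R := fun t => \sum_r d r * W r t.
Definition expect d f := \sum_t d t * f t.

Fixpoint kpow W (n : nat) : S -> S -> R :=
  if n is n'.+1 then fun r t => \sum_s kpow W n' r s * W s t
  else fun r t => (r == t)%:R.

Definition dirac (x : S) : S -> R := fun t => (t == x)%:R.

Lemma sum_stochastic_cst W r c : stochastic W -> \sum_t W r t * c = c.
Proof. by move=> HW; rewrite -mulr_suml (HW r).2 mul1r. Qed.

Lemma expect_cst d c : distr d -> expect d (fun=> c) = c.
Proof. by case=> _ Hd1; rewrite /expect -mulr_suml Hd1 mul1r. Qed.

Lemma expectD d f g : expect d (fun t => f t + g t) = expect d f + expect d g.
Proof. by rewrite /expect -big_split; apply: eq_bigr => t _; rewrite mulrDr. Qed.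

Lemma expectZ d f c : expect d (fun t => c * f t) = c * expect d f.
Proof. by rewrite /expect mulr_sumr; apply: eq_bigr => t _; rewrite mulrCA. Qed.

Lemma expect_dirac x f : expect (dirac x) f = f x.
Proof.
rewrite /expect (bigD1 x) //= /dirac eqxx mul1r big1 ?addr0 // => t /negPf ->.
by rewrite mul0r.
Qed.

Lemma distr_dirac x : distr (dirac x).
Proof.
split=> [t|]; first by rewrite ler0n.
by have := expect_dirac x (fun=> 1); rewrite /expect; under eq_bigr do rewrite mulr1.
Qed.

Lemma expect_kstep W d f :
  expect (kstep W d) f = \sum_r d r * \sum_t W r t * f t.
Proof.
rewrite /expect /kstep; under eq_bigr do rewrite mulr_suml.
rewrite exchange_big; apply: eq_bigr => r _.
by rewrite mulr_sumr; apply: eq_bigr => t _; rewrite mulrA.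
Qed.

Lemma expect_kstep_le W d f g : (forall t, 0 <= d t) ->
  (forall r, \sum_t W r t * f t <= g r) -> expect (kstep W d) f <= expect d g.
Proof. by move=> Hd Hfg; rewrite expect_kstep; apply: ler_sum => r _; exact: ler_wpM2l. Qed.

Lemma expect_kstep_invariant W d f : (forall r, \sum_t W r t * f t = f r) ->
  expect (kstep W d) f = expect d f.
Proof. by move=> Hf; rewrite expect_kstep; apply: eq_bigr => r _; rewrite Hf. Qed.

Lemma distr_kstep W d : stochastic W -> distr d -> distr (kstep W d).
Proof.
move=> HW [Hd0 Hd1]; split=> [t|].
  by apply: sumr_ge0 => r _; apply: mulr_ge0 => //; case: (HW r).
have := expect_kstep W d (fun=> 1); rewrite /expect; under eq_bigr do rewrite mulr1.
by move=> ->; rewrite -[RHS]Hd1; apply: eq_bigr => r _; rewrite sum_stochastic_cst ?mulr1.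
Qed.

Lemma stochastic_kpow W n : stochastic W -> stochastic (kpow W n).
Proof.
move=> HW; elim: n => [|n IH] r /=; last exact: distr_kstep (IH r).
split=> [t|]; first by rewrite ler0n.
by rewrite (bigD1 r) //= eqxx big1 ?addr0 // => t; rewrite eq_sym => /negPf ->.
Qed.

Lemma kstep_kpow W n d : kstep (kpow W n) d = iter n (kstep W) d.
Proof.
elim: n => [|n IH] /=; apply: functional_extensionality => t; rewrite /kstep.
  by rewrite (bigD1 t) //= eqxx mulr1 big1 ?addr0 // => r /negPf ->; rewrite mulr0.
rewrite -IH /kstep; under eq_bigr do rewrite mulr_sumr.
rewrite exchange_big /=; apply: eq_bigr => s _.
by rewrite mulr_suml; apply: eq_bigr => r _; rewrite mulrA.
Qed.

End MarkovKernels.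

Definition run_kernels {n} {S : finType} (step : update n -> S -> S -> R)
    (d : S -> R) (s : seq (update n)) :=
  foldl (fun d u => kstep (step u) d) d s.

Lemma markov {S : finType} (d Y : S -> R) (c B : R) :
  (forall t, 0 <= d t) -> (forall t, 0 <= Y t) -> 0 <= c -> 0 <= B ->
  expect d Y <= B * c -> \sum_(t | c < Y t) d t <= B.
Proof.
move=> Hd HY Hc HB HE.
have HdY t : 0 <= d t * Y t by exact: mulr_ge0.
have [c0|c_neq0] := eqVneq c 0.
  rewrite c0 mulr0 in HE *; have dY0 t : d t * Y t = 0.
    apply: (@psumr_eq0P _ _ predT (fun t => d t * Y t)) => //.
    by apply/eqP; rewrite eq_le sumr_ge0 // andbT.
  rewrite big1 // => t Yt; have /eqP := dY0 t.
  by rewrite mulf_eq0 (gt_eqF Yt) orbF => /eqP.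
have c_gt0 : 0 < c by rewrite lt_def c_neq0.
rewrite -(ler_pM2r c_gt0) mulr_suml; apply: le_trans HE.
apply: (@le_trans _ _ (\sum_(t | c < Y t) d t * Y t)).
  by apply: ler_sum => t /ltW Yt; exact: ler_wpM2l.
by rewrite [leRHS](bigID (fun t => c < Y t)) lerDl sumr_ge0.
Qed.

Lemma sum_le_union {S : finType} (d : S -> R) (P Q1 Q2 : pred S) :
  (forall t, 0 <= d t) -> (forall t, P t -> Q1 t || Q2 t) ->
  \sum_(t | P t) d t <= \sum_(t | Q1 t) d t + \sum_(t | Q2 t) d t.
Proof.
move=> Hd HPQ; rewrite [leLHS]big_mkcond [X in _ <= X + _]big_mkcond.
rewrite [X in _ <= _ + X]big_mkcond -big_split; apply: ler_sum => t _.
move: (HPQ t) (Hd t); case: (P t); case: (Q1 t); case: (Q2 t) => /= HP Ht; lra.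
Qed.

Section Estimators.
Context {S : finType}.
Implicit Types (d f : S -> R) (W : S -> S -> R).

(* Only an upper bound on the mean is kept: a saturated counter falls behind. *)
Definition tracks (a : R) d f (x : nat) :=
  expect d f <= x%:R /\ expect d (fun t => (f t - x%:R) ^+ 2) <= a * x%:R ^+ 2.

Context {a : R} (a_ge0 : 0 <= a).

Lemma tracks_kstep W d f x : distr d ->
  (forall r, \sum_t W r t * f t <= f r + 1) ->
  (forall r, \sum_t W r t * (f t - x.+1%:R) ^+ 2 <= (f r - x%:R) ^+ 2 + a * f r) ->
  tracks a d f x -> tracks a (kstep W d) f x.+1.
Proof.
move=> Hd Hmean Hvar [Ef Vf]; have Hd0 := Hd.1.
have Hx : 0 <= x%:R :> R by rewrite ler0n.
rewrite /tracks -natr1; split.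
  apply: le_trans (expect_kstep_le W d f (fun r => f r + 1) Hd0 Hmean) _.
  by rewrite expectD (expect_cst _ _ Hd); lra.
rewrite natr1; apply: le_trans (expect_kstep_le W d _ _ Hd0 Hvar) _.
rewrite expectD expectZ -natr1.
have : a * expect d f <= a * x%:R by exact: ler_wpM2l.
have : 0 <= a * x%:R by exact: mulr_ge0.
have := a_ge0; nra.
Qed.

Lemma tracks_kstep_invariant W d f x :
  (forall r, \sum_t W r t * f t = f r) ->
  (forall r, \sum_t W r t * (f t - x%:R) ^+ 2 = (f r - x%:R) ^+ 2) ->
  tracks a d f x -> tracks a (kstep W d) f x.
Proof. by move=> Hf Hsq [Ef Vf]; rewrite /tracks !expect_kstep_invariant. Qed.

Lemma tracks_deviation d f x e : distr d -> 0 < e -> tracks a d f x ->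
  \sum_(t | (e * x%:R) ^+ 2 < (f t - x%:R) ^+ 2) d t <= a / e ^+ 2.
Proof.
move=> Hd He [_ Vf]; apply: markov => //; first exact: Hd.1.
- by move=> t; exact: sqr_ge0.
- exact: sqr_ge0.
- by rewrite divr_ge0 // sqr_ge0.
by rewrite exprMn mulrA divfK // gt_eqF // exprn_gt0.
Qed.

End Estimators.

Section ProductKernels.
Context {S1 S2 : finType}.

Definition kfst (W : S1 -> S1 -> R) (r t : S1 * S2) := W r.1 t.1 * (t.2 == r.2)%:R.
Definition ksnd (W : S2 -> S2 -> R) (r t : S1 * S2) := W r.2 t.2 * (t.1 == r.1)%:R.

Lemma sum_kfst W r (F : S1 * S2 -> R) :
  \sum_t kfst W r t * F t = \sum_t1 W r.1 t1 * F (t1, r.2).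
Proof.
transitivity (\sum_t1 \sum_t2 kfst W r (t1, t2) * F (t1, t2)).
  by rewrite pair_bigA; apply: eq_bigr => -[].
apply: eq_bigr => t1 _; rewrite (bigD1 r.2) //= /kfst /= eqxx mulr1 big1 ?addr0 //.
by move=> t2 /negPf ->; rewrite mulr0 mul0r.
Qed.

Lemma sum_ksnd W r (F : S1 * S2 -> R) :
  \sum_t ksnd W r t * F t = \sum_t2 W r.2 t2 * F (r.1, t2).
Proof.
transitivity (\sum_t1 \sum_t2 ksnd W r (t1, t2) * F (t1, t2)).
  by rewrite pair_bigA; apply: eq_bigr => -[].
rewrite exchange_big; apply: eq_bigr => t2 _.
rewrite (bigD1 r.1) //= /ksnd /= eqxx mulr1 big1 ?addr0 //.
by move=> t1 /negPf ->; rewrite mulr0 mul0r.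
Qed.

Lemma kfst_invariant_snd W r (g : S2 -> R) : stochastic W ->
  \sum_t kfst W r t * g t.2 = g r.2.
Proof. by move=> HW; rewrite sum_kfst /= sum_stochastic_cst. Qed.

Lemma ksnd_invariant_fst W r (g : S1 -> R) : stochastic W ->
  \sum_t ksnd W r t * g t.1 = g r.1.
Proof. by move=> HW; rewrite sum_ksnd /= sum_stochastic_cst. Qed.

Lemma stochastic_kfst W : stochastic W -> stochastic (kfst W).
Proof.
move=> HW r; split=> [t|]; first by apply: mulr_ge0; [case: (HW r.1)|rewrite ler0n].
by have := kfst_invariant_snd W r (fun=> 1) HW; under eq_bigr do rewrite mulr1.
Qed.

Lemma stochastic_ksnd W : stochastic W -> stochastic (ksnd W).
Proof.
move=> HW r; split=> [t|]; first by apply: mulr_ge0; [case: (HW r.2)|rewrite ler0n].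
by have := ksnd_invariant_fst W r (fun=> 1) HW; under eq_bigr do rewrite mulr1.
Qed.

Lemma tracks_kfst_snd (a : R) W d (g : S2 -> R) x : stochastic W ->
  tracks a d (fun t => g t.2) x -> tracks a (kstep (kfst W) d) (fun t => g t.2) x.
Proof.
move=> HW; apply: tracks_kstep_invariant => r.
  exact: (kfst_invariant_snd W r g HW).
exact: (kfst_invariant_snd W r (fun c => (g c - x%:R) ^+ 2) HW).
Qed.

Lemma tracks_ksnd_fst (a : R) W d (g : S1 -> R) x : stochastic W ->
  tracks a d (fun t => g t.1) x -> tracks a (kstep (ksnd W) d) (fun t => g t.1) x.
Proof.
move=> HW; apply: tracks_kstep_invariant => r.
  exact: (ksnd_invariant_fst W r g HW).
exact: (ksnd_invariant_fst W r (fun c => (g c - x%:R) ^+ 2) HW).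
Qed.

End ProductKernels.

Section MorrisCounter.
Variables (a : R) (cap : nat).
Hypothesis a_gt0 : 0 < a.

Definition morris_est (c : nat) := ((1 + a) ^+ c - 1) / a.
Definition morris_prob (c : nat) := ((1 + a) ^+ c)^-1.

Definition morris (c t : 'I_cap.+1) :=
  if (c < cap)%N then
    if val t == c.+1 then morris_prob c
    else if t == c then 1 - morris_prob c else 0
  else (t == c)%:R.

Lemma morris_sum (c : 'I_cap.+1) (f : 'I_cap.+1 -> R) :
  \sum_t morris c t * f t =
  if (c < cap)%N then morris_prob c * f (inord c.+1) + (1 - morris_prob c) * f c
  else f c.
Proof.
rewrite /morris; case: ifP => c_lt; last first.
  by rewrite (bigD1 c) //= eqxx mul1r big1 ?addr0 // => t /negPf ->; rewrite mul0r.
have c1E : nat_of_ord (inord c.+1 : 'I_cap.+1) = c.+1 by rewrite inordK.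
have c_neq : c != inord c.+1 by rewrite -val_eqE /= c1E neq_ltn ltnSn.
rewrite (bigD1 (inord c.+1)) //= c1E eqxx (bigD1 c) //= (ltn_eqF (ltnSn c)) eqxx.
rewrite big1 ?addr0 // => t /andP [t_neq1 /negPf ->].
by rewrite ifN ?mul0r // -c1E val_eqE.
Qed.

Lemma one_le_morris_base c : 1 <= (1 + a) ^+ c.
Proof. by apply: exprn_ege1; have := a_gt0; lra. Qed.

Lemma morris_est0 : morris_est 0 = 0.
Proof. by rewrite /morris_est expr0 subrr mul0r. Qed.

Lemma morris_est_ge0 c : 0 <= morris_est c.
Proof. by rewrite /morris_est divr_ge0 ?subr_ge0 ?one_le_morris_base ?ltW. Qed.

Lemma morris_estS c : morris_est c.+1 = morris_est c + (1 + a) ^+ c.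
Proof. by rewrite /morris_est exprSr; field; rewrite gt_eqF. Qed.

Lemma morris_stochastic : stochastic morris.
Proof.
have p_gt0 c : 0 < morris_prob c by rewrite invr_gt0; have := one_le_morris_base c; lra.
have p_le1 c : morris_prob c <= 1.
  by rewrite invf_le1 ?one_le_morris_base //; have := one_le_morris_base c; lra.
move=> c; split=> [t|].
  rewrite /morris; case: ifP => _; last by rewrite ler0n.
  by have := p_gt0 c; have := p_le1 c; case: ifP => _; [lra|case: ifP => _; lra].
have := morris_sum c (fun=> 1); under eq_bigr do rewrite mulr1.
by move=> ->; case: ifP => _; lra.
Qed.

Lemma morris_mean c : \sum_t morris c t * morris_est t <= morris_est c + 1.
Proof.
rewrite morris_sum; case: ifP => c_lt; last lra.
have u_gt0 : 0 < (1 + a) ^+ c := lt_le_trans ltr01 (one_le_morris_base c).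
rewrite inordK // morris_estS /morris_prob.
by rewrite [leLHS](_ : _ = morris_est c + 1) //; field; rewrite gt_eqF.
Qed.

Lemma morris_var c x : x + 1 <= morris_est cap ->
  \sum_t morris c t * (morris_est t - (x + 1)) ^+ 2 <=
  (morris_est c - x) ^+ 2 + a * morris_est c.
Proof.
move=> x_lt_cap; rewrite morris_sum; case: ifP => c_lt; last first.
  have -> : nat_of_ord c = cap by apply/eqP; rewrite eqn_leq -ltnS ltn_ord leqNgt c_lt.
  by have := morris_est_ge0 cap; have := a_gt0; nra.
have u_gt0 : 0 < (1 + a) ^+ c := lt_le_trans ltr01 (one_le_morris_base c).
have a_est : a * morris_est c = (1 + a) ^+ c - 1.
  by rewrite /morris_est; field; rewrite gt_eqF.
rewrite inordK // morris_estS /morris_prob a_est.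
rewrite [leLHS](_ : _ = (morris_est c - x) ^+ 2 + ((1 + a) ^+ c - 1)) //.
by field; rewrite gt_eqF.
Qed.

End MorrisCounter.

Definition ins_mass {n} (u : update n) : nat := if 0 < u.2 then `|u.2|%N else 0.
Definition del_mass {n} (u : update n) : nat := if 0 < u.2 then 0 else `|u.2|%N.
Definition ins_total {n} (s : seq (update n)) := \sum_(u <- s) ins_mass u.
Definition del_total {n} (s : seq (update n)) := \sum_(u <- s) del_mass u.

Section StreamMasses.
Context {n : nat} {s : seq (update n)}.

Lemma sum_coord (V : nmodType) (p : pred (update n)) (g : update n -> V) :
  \sum_(i < n) \sum_(u <- s | (u.1 == i) && p u) g u = \sum_(u <- s | p u) g u.
Proof.
rewrite (exchange_big_dep p) /= => [|i u _ /andP[] //].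
apply: eq_bigr => u pu; rewrite (big_pred1 u.1) // => i /=.
by rewrite pu andbT eq_sym.
Qed.

Lemma ins_massE (u : update n) : (ins_mass u)%:Z = if 0 < u.2 then u.2 else 0.
Proof. by rewrite /ins_mass; case: ifP => // /ltW /gez0_abs. Qed.

Lemma del_massE (u : update n) : (del_mass u)%:Z = if u.2 < 0 then - u.2 else 0.
Proof.
by rewrite /del_mass; case: (ltrgtP u.2 0) => [/ltz0_abs|_|->].
Qed.

Lemma update_mass (u : update n) : u.2 = (ins_mass u)%:Z - (del_mass u)%:Z.
Proof.
by rewrite ins_massE del_massE; case: (ltrgtP u.2 0) => [_|_|->]; rewrite ?subr0 ?sub0r ?opprK.
Qed.

Lemma l1norm_nonneg (v : 'I_n -> int) : (forall i, 0 <= v i) ->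
  l1norm v = \sum_i (v i)%:~R.
Proof. by move=> v_ge0; apply: eq_bigr => i _; rewrite ger0_norm. Qed.

Lemma l1norm_freq : strict_turnstile s ->
  l1norm (freq s) = (ins_total s)%:R - (del_total s)%:R.
Proof.
move=> Hst; rewrite l1norm_nonneg => [|i]; last by have := Hst (size s) i; rewrite take_size.
under eq_bigr do rewrite rmorph_sum /=.
rewrite (eq_bigr (fun i => \sum_(u <- s | (u.1 == i) && predT u) (u.2)%:~R)) => [|i _].
  by rewrite sum_coord /ins_total /del_total !natr_sum -sumrB; apply: eq_bigr => u _;
    rewrite !pmulrn -intrB -update_mass.
by apply: eq_bigl => u; rewrite andbT.
Qed.

Lemma l1norm_ins_del :
  l1norm (fun i => insv s i + delv s i) = (ins_total s)%:R + (del_total s)%:R.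
Proof.
rewrite l1norm_nonneg => [|i]; last first.
  by rewrite addr_ge0 // sumr_ge0 // => u /andP [_ /ltW].
under eq_bigr do rewrite intrD.
rewrite big_split /= /ins_total /del_total !natr_sum; congr (_ + _).
  under eq_bigr do rewrite rmorph_sum /=.
  rewrite sum_coord big_mkcond /=; apply: eq_bigr => u _.
  by rewrite pmulrn ins_massE; case: ifP.
under eq_bigr do rewrite /delv ler0_norm ?sumr_le0 // => [|u /andP [_ /ltW]] //.
under eq_bigr do rewrite -sumrN rmorph_sum /=.
rewrite sum_coord big_mkcond /=; apply: eq_bigr => u _.
by rewrite pmulrn del_massE; case: ifP.
Qed.

Lemma mass_total_le M : (forall u, u \in s -> (`|u.2| <= M)%N) ->
  (ins_total s + del_total s <= size s * M)%N.
Proof.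
move=> le_M; rewrite /ins_total /del_total -big_split /=.
rewrite -[X in (_ <= X * _)%N]count_predT -sum1_count big_distrl /= big_seq [leqRHS]big_seq.
apply: leq_sum => u /le_M; rewrite mul1n /ins_mass /del_mass.
by case: ifP; rewrite ?addn0.
Qed.

End StreamMasses.

Lemma approx_sub (u v p q e eps : R) : 0 < e -> 0 <= p -> 0 <= q ->
  (u - p) ^+ 2 <= (e * p) ^+ 2 -> (v - q) ^+ 2 <= (e * q) ^+ 2 ->
  e * (p + q) <= eps * (p - q) ->
  (1 - eps) * (p - q) <= u - v <= (1 + eps) * (p - q).
Proof.
move=> e_gt0 p_ge0 q_ge0 du dv err.
have ep_ge0 : 0 <= e * p by exact: mulr_ge0 (ltW e_gt0) p_ge0.
have eq_ge0 : 0 <= e * q by exact: mulr_ge0 (ltW e_gt0) q_ge0.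
have [du1 du2] : u - p <= e * p /\ p - u <= e * p by split; nra.
have [dv1 dv2] : v - q <= e * q /\ q - v <= e * q by split; nra.
by apply/andP; split; nra.
Qed.

Section MorrisPair.
Variables (a : R) (cap : nat).
Hypothesis a_gt0 : 0 < a.

Local Notation state := ('I_cap.+1 * 'I_cap.+1)%type.
Local Notation W := (morris a cap).

Definition pair_counts (d : state -> R) (x y : nat) :=
  [/\ distr d, tracks a d (fun t => morris_est a t.1) x
             & tracks a d (fun t => morris_est a t.2) y].

Lemma pair_counts0 : pair_counts (dirac (ord0, ord0)) 0 0.
Proof.
split; first exact: distr_dirac.
all: by rewrite /tracks !expect_dirac /= morris_est0 subrr expr0n /= mulr0.
Qed.

Lemma pair_counts_kfst d x y : x.+1%:R <= morris_est a cap ->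
  pair_counts d x y -> pair_counts (kstep (kfst W) d) x.+1 y.
Proof.
move=> x_lt_cap [Hd Hx Hy]; have HW := morris_stochastic a cap a_gt0; split.
- by apply: distr_kstep Hd; exact: stochastic_kfst.
- apply: (tracks_kstep (ltW a_gt0)) => // r; rewrite sum_kfst /=.
    exact: morris_mean.
  by rewrite -natr1; apply: morris_var; rewrite ?natr1.
- exact: (tracks_kfst_snd a W d (morris_est a) y HW Hy).
Qed.

Lemma pair_counts_ksnd d x y : y.+1%:R <= morris_est a cap ->
  pair_counts d x y -> pair_counts (kstep (ksnd W) d) x y.+1.
Proof.
move=> y_lt_cap [Hd Hx Hy]; have HW := morris_stochastic a cap a_gt0; split.
- by apply: distr_kstep Hd; exact: stochastic_ksnd.
- exact: (tracks_ksnd_fst a W d (morris_est a) x HW Hx).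
- apply: (tracks_kstep (ltW a_gt0)) => // r; rewrite sum_ksnd /=.
    exact: morris_mean.
  by rewrite -natr1; apply: morris_var; rewrite ?natr1.
Qed.

Lemma pair_counts_kpow_kfst d x y k : (x + k)%:R <= morris_est a cap ->
  pair_counts d x y -> pair_counts (kstep (kpow (kfst W) k) d) (x + k) y.
Proof.
move=> le_cap Hd; rewrite kstep_kpow; elim: k le_cap => [|k IH] le_cap.
  by rewrite addn0.
rewrite addnS; apply: pair_counts_kfst; first by rewrite -addnS.
by apply: IH; apply: le_trans le_cap; rewrite ler_nat leq_add2l.
Qed.

Lemma pair_counts_kpow_ksnd d x y k : (y + k)%:R <= morris_est a cap ->
  pair_counts d x y -> pair_counts (kstep (kpow (ksnd W) k) d) x (y + k).
Proof.
move=> le_cap Hd; rewrite kstep_kpow; elim: k le_cap => [|k IH] le_cap.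
  by rewrite addn0.
rewrite addnS; apply: pair_counts_ksnd; first by rewrite -addnS.
by apply: IH; apply: le_trans le_cap; rewrite ler_nat leq_add2l.
Qed.

Definition pair_kernel {n} (u : update n) : state -> state -> R :=
  if 0 < u.2 then kpow (kfst W) `|u.2|%N else kpow (ksnd W) `|u.2|%N.

Lemma stochastic_pair_kernel n (u : update n) : stochastic (pair_kernel u).
Proof.
have HW := morris_stochastic a cap a_gt0.
by rewrite /pair_kernel; case: ifP => _; apply: stochastic_kpow;
  [exact: stochastic_kfst|exact: stochastic_ksnd].
Qed.

Lemma pair_counts_run n (s : seq (update n)) d x y :
  (x + ins_total s)%:R <= morris_est a cap -> (y + del_total s)%:R <= morris_est a cap ->
  pair_counts d x y ->
  pair_counts (run_kernels pair_kernel d s) (x + ins_total s) (y + del_total s).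
Proof.
elim: s d x y => [|u s IH] d x y /=; first by rewrite /ins_total /del_total !big_nil !addn0.
rewrite /ins_total /del_total !big_cons !addnA => le_ins le_del Hd.
have le_cap z k l : (z + k + l)%:R <= morris_est a cap -> (z + k)%:R <= morris_est a cap.
  by move=> H; apply: le_trans H; rewrite ler_nat leq_addr.
apply: IH => //; move: le_ins le_del; rewrite /pair_kernel /ins_mass /del_mass.
case: ifP => _ le_ins le_del; rewrite addn0.
  exact: pair_counts_kpow_kfst (le_cap _ _ _ le_ins) Hd.
exact: pair_counts_kpow_ksnd (le_cap _ _ _ le_del) Hd.
Qed.

Lemma pair_counts_success d p q e eps delta :
  0 < e -> pair_counts d p q -> e * (p%:R + q%:R) <= eps * (p%:R - q%:R) ->
  2 * a <= e ^+ 2 * delta ->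
  1 - delta <= \sum_(t : state | ((1 - eps) * (p%:R - q%:R) <= morris_est a t.1 - morris_est a t.2)
                        && (morris_est a t.1 - morris_est a t.2 <= (1 + eps) * (p%:R - q%:R))) d t.
Proof.
move=> e_gt0 [Hd Hp Hq] err small_a.
pose L := p%:R - q%:R : R.
pose good (t : state) := ((1 - eps) * L <= morris_est a t.1 - morris_est a t.2)
                         && (morris_est a t.1 - morris_est a t.2 <= (1 + eps) * L).
change (1 - delta <= \sum_(t | good t) d t).
pose dev_p (t : state) := (e * p%:R) ^+ 2 < (morris_est a t.1 - p%:R) ^+ 2.
pose dev_q (t : state) := (e * q%:R) ^+ 2 < (morris_est a t.2 - q%:R) ^+ 2.
have bad_dev t : ~~ good t -> dev_p t || dev_q t.
  apply: contraR; rewrite negb_or /dev_p /dev_q -!leNgt => /andP [dp dq].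
  by apply: approx_sub dp dq err; rewrite ?ler0n.
have mass_dev_p := tracks_deviation (ltW a_gt0) _ _ _ _ Hd e_gt0 Hp.
have mass_dev_q := tracks_deviation (ltW a_gt0) _ _ _ _ Hd e_gt0 Hq.
have mass_bad := sum_le_union _ _ _ _ Hd.1 bad_dev.
have mass_split : \sum_t d t = \sum_(t | good t) d t + \sum_(t | ~~ good t) d t.
  by rewrite (bigID good).
have small_dev : a / e ^+ 2 + a / e ^+ 2 <= delta.
  by rewrite -mulrDl ler_pdivrMr ?exprn_gt0 // mulrC; lra.
rewrite Hd.2 in mass_split; rewrite /dev_p /dev_q in mass_bad; lra.
Qed.

End MorrisPair.

Section FiniteStateAlgorithm.
Context {n : nat} {S : finType}.
Variables (init : S -> R) (step : update n -> S -> S -> R) (out : S -> R).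

Definition fin_alg : stream_alg n #|{: S}| :=
  StreamAlg (fun i => init (enum_val i)) (fun u i j => step u (enum_val i) (enum_val j))
            (fun i => out (enum_val i)).

Lemma sum_enum_val (P : pred S) (F : S -> R) :
  \sum_(i < #|{: S}| | P (enum_val i)) F (enum_val i) = \sum_(x | P x) F x.
Proof. by rewrite -(big_enum_val_cond (A := predT)); apply: eq_bigl. Qed.

Lemma valid_fin_alg : distr init -> (forall u, stochastic (step u)) -> valid_alg fin_alg.
Proof.
move=> [init_ge0 init_sum] Hstep; split.
  by split=> [i|]; rewrite ?init_ge0 // (sum_enum_val predT init).
move=> u i; have [step_ge0 step_sum] := Hstep u (enum_val i).
by split=> [j|]; rewrite ?step_ge0 //= (sum_enum_val predT (step u (enum_val i))).
Qed.

Lemma run_distr_fin_alg s i : run_distr fin_alg s i = run_kernels step init s (enum_val i).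
Proof.
rewrite /run_distr /run_kernels /=.
suff run_from d (d' : 'I_#|{: S}| -> R) : (forall j, d' j = d (enum_val j)) ->
    foldl (fun d' u t => \sum_(r < #|{: S}|) d' r * step u (enum_val r) (enum_val t)) d' s i
    = foldl (fun d u => kstep (step u) d) d s (enum_val i) by exact: run_from.
elim: s d d' => [|u s IH] d d' d'E /=; first exact: d'E.
apply: IH => j; rewrite /kstep -(sum_enum_val predT (fun x => d x * step u x (enum_val j))).
by apply: eq_bigr => r _; rewrite d'E.
Qed.

Lemma success_prob_fin_alg eps s :
  success_prob fin_alg eps s =
  \sum_(x | ((1 - eps) * l1norm (freq s) <= out x) && (out x <= (1 + eps) * l1norm (freq s)))
    run_kernels step init s x.
Proof.
rewrite -sum_enum_val; apply: eq_bigr => i _; exact: run_distr_fin_alg.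
Qed.

End FiniteStateAlgorithm.

Lemma ln_le (x y : R) : 0 < x -> x <= y -> ln x <= ln y.
Proof.
move=> x_gt0; rewrite le_eqVlt => /orP [/eqP -> //|lt_xy].
by apply/RleP/Rlt_le/ln_increasing; apply/RltP.
Qed.

Lemma ln2_gt0 : 0 < ln 2.
Proof.
have : Rlt (ln 1) (ln 2) by apply: ln_increasing; [exact: Rlt_0_1|exact: Rlt_plus_1].
by rewrite ln_1 => /RltP.
Qed.

Lemma log2E (x : R) : log2 x = ln x / ln 2.
Proof. by rewrite /log2 RdivE. Qed.

Lemma log2_le (x y : R) : 0 < x -> x <= y -> log2 x <= log2 y.
Proof. by move=> x_gt0 le_xy; rewrite !log2E ler_pM2r ?invr_gt0 ?ln2_gt0 ?ln_le. Qed.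

Lemma log2_ge0 (x : R) : 1 <= x -> 0 <= log2 x.
Proof. by move=> x_ge1; have := log2_le _ _ ltr01 x_ge1; rewrite log2E ln_1 mul0r. Qed.

(* The argument of [log2] is parsed in [R_scope]; [%R] selects the ring product. *)
Lemma log2M (x y : R) : 0 < x -> 0 < y -> log2 (x * y)%R = log2 x + log2 y.
Proof. by move=> x_gt0 y_gt0; rewrite !log2E -mulrDl -RmultE ln_mult //; apply/RltP. Qed.

Lemma log2_2 : log2 2%:R = 1.
Proof.
have -> : 2%:R = IZR 2 by rewrite IZRposE INRE.
by rewrite log2E divff // gt_eqF ?ln2_gt0.
Qed.

Lemma log2_expn2 (j : nat) : log2 (2 ^ j)%:R = j%:R.
Proof.
elim: j => [|j IH]; first by rewrite expn0 log2E ln_1 mul0r.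
by rewrite expnS natrM log2M ?ltr0n ?expn_gt0 // IH log2_2 -natr1 addrC.
Qed.

Lemma trunc_log_le_log2 (n : nat) : (0 < n)%N -> (trunc_log 2 n)%:R <= log2 n%:R.
Proof.
move=> n_gt0; rewrite -[leLHS]log2_expn2; apply: log2_le; first by rewrite ltr0n expn_gt0.
by rewrite ler_nat trunc_logP.
Qed.

Lemma bernoulli_ineq (x : R) (k : nat) : 0 <= x -> 1 + k%:R * x <= (1 + x) ^+ k.
Proof.
move=> x_ge0; elim: k => [|k IH]; first by rewrite mul0r addr0 expr0.
have : 0 <= (1 + x) ^+ k by apply: exprn_ge0; lra.
have : 0 <= k%:R * x by rewrite mulr_ge0 ?ler0n.
by rewrite exprS -natr1; nra.
Qed.

Lemma expn_succ_le_exp2 (n K l : nat) : (0 < n < 2 ^ l)%N -> (n ^ K + 1 <= 2 ^ (K.+1 * l))%N.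
Proof.
move=> /andP [n_gt0 n_lt]; rewrite mulnC expnM expnS.
have : (n ^ K <= (2 ^ l) ^ K)%N by elim: K => // K IH; rewrite !expnS leq_mul // ltnW.
have : (1 <= n ^ K)%N by rewrite expn_gt0 n_gt0.
have : (2 <= 2 ^ l)%N by apply: leq_trans n_lt; lia.
nia.
Qed.

Lemma morris_est_cap (n K l r : nat) : (0 < r)%N -> (0 < n < 2 ^ l)%N ->
  (n ^ K)%:R <= morris_est r%:R^-1 (r * K.+1 * l).
Proof.
move=> r_gt0 n_bounds; set a : R := r%:R^-1.
have a_gt0 : 0 < a by rewrite invr_gt0 ltr0n.
have a_le1 : a <= 1 by rewrite invf_le1 ?ltr0n // ler1n.
have base_ge2 : 2 <= (1 + a) ^+ r.
  by have := bernoulli_ineq a r (ltW a_gt0); rewrite mulfV ?pnatr_eq0 -?lt0n.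
have pow_ge : 2 ^+ (K.+1 * l) <= (1 + a) ^+ (r * K.+1 * l).
  rewrite -mulnA [leRHS]exprM; apply: lerXn2r; rewrite ?nnegrE //; lra.
have nK_le : (n ^ K)%:R + 1 <= 2 ^+ (K.+1 * l) :> R.
  by rewrite -natrX natr1 ler_nat -addn1; exact: expn_succ_le_exp2.
have : 0 <= (n ^ K)%:R :> R by rewrite ler0n.
rewrite /morris_est ler_pdivlMr //; nra.
Qed.

Lemma exists_counter_base (eps delta alpha : R) :
  0 < eps < 1 -> 0 < delta < 1 -> 1 <= alpha ->
  exists r : nat, [/\ (0 < r)%N, r%:R <= 4 * (alpha / eps) ^+ 2 * (1 / delta)
                    & 2 * r%:R^-1 <= (eps / alpha) ^+ 2 * delta].
Proof.
move=> /andP [eps_gt0 eps_lt1] /andP [delta_gt0 delta_lt1] alpha_ge1.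
pose Q := 2 * (alpha / eps) ^+ 2 * (1 / delta).
have Q_ge1 : 1 <= Q.
  have : 1 <= (alpha / eps) ^+ 2 by rewrite exprn_ege1 // ler_pdivlMr // mul1r; lra.
  have : 1 <= 1 / delta by rewrite ler_pdivlMr // mul1r; lra.
  by rewrite /Q; nra.
exists (Num.truncn Q).+1; split => //.
- suff : (Num.truncn Q).+1%:R <= Q + 1 by move: Q_ge1; rewrite /Q; lra.
  by rewrite -natr1 lerD2r truncn_le; lra.
- have Q_lt := truncnS_gt Q.
  have -> : (eps / alpha) ^+ 2 * delta = 2 / Q.
    by rewrite /Q; field; rewrite !gt_eqF //; lra.
  by rewrite ler_pM2l // lef_pV2 ?posrE ?ltW //; lra.
Qed.

Lemma counter_size_le (r k t B Z : R) : 1 <= r <= B -> 1 <= k -> 1 <= t <= 2 * Z ->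
  r * k * t + 1 <= 4 * B * k * Z.
Proof.
move=> /andP [r_ge1 r_le] k_ge1 /andP [t_ge1 t_le].
have rk_ge1 : 1 <= r * k by nra.
have rkt_ge1 : 1 <= r * k * t by nra.
have : r * k * t <= B * k * (2 * Z) by apply: ler_pM; [nra|lra|apply: ler_pM; lra|lra].
lra.
Qed.

Lemma log2_counter_states (c X Y Z : R) (cap : nat) : 1 <= c -> 1 <= X -> 1 <= Y -> 1 <= Z ->
  cap.+1%:R <= c * X ^+ 2 * Y * Z ->
  log2 (cap.+1 * cap.+1)%N%:R <= (4 + 2 * log2 c) * (log2 X + log2 Y + log2 Z + 1).
Proof.
move=> c_ge1 X_ge1 Y_ge1 Z_ge1 cap_le.
have pos (u : R) : 1 <= u -> 0 < u by move=> ?; lra.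
have logB : log2 (c * X ^+ 2 * Y * Z)%R = log2 c + 2 * log2 X + log2 Y + log2 Z.
  by rewrite !log2M ?mulr_gt0 ?exprn_gt0 ?pos //; ring.
have := log2_le _ _ (ltr0Sn _ cap) cap_le; rewrite logB natrM log2M ?ltr0Sn //.
have := log2_ge0 _ c_ge1; have := log2_ge0 _ X_ge1.
have := log2_ge0 _ Y_ge1; have := log2_ge0 _ Z_ge1.
nra.
Qed.

Definition counter_cap (K n r : nat) := (r * K.+1 * (trunc_log 2 n).+1)%N.

Definition morris_pair_alg (n : nat) (a : R) (cap : nat) :=
  fin_alg (dirac (ord0, ord0)) (@pair_kernel a cap n)
    (fun t : 'I_cap.+1 * 'I_cap.+1 => morris_est a t.1 - morris_est a t.2).

Lemma valid_morris_pair_alg n a cap : 0 < a -> valid_alg (morris_pair_alg n a cap).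
Proof.
by move=> a_gt0; apply: valid_fin_alg; [exact: distr_dirac|exact: stochastic_pair_kernel].
Qed.

Lemma morris_pair_alg_space (K n r : nat) (eps delta alpha : R) :
  (2 <= n)%N -> 0 < eps < 1 -> 0 < delta < 1 -> 1 <= alpha -> (0 < r)%N ->
  r%:R <= 4 * (alpha / eps) ^+ 2 * (1 / delta) ->
  log2 #|{: 'I_(counter_cap K n r).+1 * 'I_(counter_cap K n r).+1}|%:R <=
  (4 + 2 * log2 (16 * K.+1)%N%:R) *
    (log2 (alpha / eps) + log2 (1 / delta) + log2 (log2 n%:R) + 1).
Proof.
move=> n_ge2 /andP [eps_gt0 eps_lt1] /andP [delta_gt0 delta_lt1] alpha_ge1 r_gt0 r_le.
rewrite card_prod card_ord !RdivE R1E.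
have X_ge1 : 1 <= alpha / eps by rewrite ler_pdivlMr // mul1r; lra.
have Y_ge1 : 1 <= 1 / delta by rewrite ler_pdivlMr // mul1r; lra.
have tl_ge1 : 1 <= (trunc_log 2 n)%:R :> R by rewrite ler1n trunc_log_gt0.
have tl_le := trunc_log_le_log2 _ (ltnW n_ge2).
apply: log2_counter_states; rewrite ?ler1n ?muln_gt0 //; try lra.
rewrite -natr1 /counter_cap !natrM.
have -> : 16 * K.+1%:R * (alpha / eps) ^+ 2 * (1 / delta) * log2 n%:R
          = 4 * (4 * (alpha / eps) ^+ 2 * (1 / delta)) * K.+1%:R * log2 n%:R by ring.
apply: counter_size_le; [by rewrite ler1n r_gt0|by rewrite ler1n|].
by rewrite ler1n /= -[(trunc_log 2 n).+1%:R]natr1; lra.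
Qed.

Lemma morris_pair_alg_correct (K n r M : nat) (eps delta alpha : R) (s : seq (update n)) :
  (2 <= n)%N -> 0 < eps -> 1 <= alpha -> (0 < r)%N ->
  2 * r%:R^-1 <= (eps / alpha) ^+ 2 * delta ->
  (forall u, u \in s -> (`|u.2| <= M)%N) -> (size s * M <= n ^ K)%N ->
  strict_turnstile s -> L1_alpha_property alpha s ->
  1 - delta <= success_prob (morris_pair_alg n r%:R^-1 (counter_cap K n r)) eps s.
Proof.
move=> n_ge2 eps_gt0 alpha_ge1 r_gt0 small_a le_M le_mass Hst Halpha.
set a : R := r%:R^-1; set cap := counter_cap K n r.
have a_gt0 : 0 < a by rewrite invr_gt0 ltr0n.
have le_cap : (n ^ K)%:R <= morris_est a cap.
  by apply: morris_est_cap; rewrite // trunc_log_ltn ?andbT // ltnW.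
have tot_le := leq_trans (mass_total_le _ le_M) le_mass.
have Hcounts : pair_counts a cap (run_kernels (pair_kernel a cap) (dirac (ord0, ord0)) s)
                 (ins_total s) (del_total s).
  have := @pair_counts_run a cap a_gt0 n s _ 0 0; rewrite !add0n; apply; last exact: pair_counts0;
    apply: le_trans le_cap; rewrite ler_nat; apply: leq_trans tot_le.
    exact: leq_addr.
  exact: leq_addl.
rewrite /L1_alpha_property l1norm_ins_del l1norm_freq // in Halpha.
rewrite success_prob_fin_alg l1norm_freq //.
apply: (@pair_counts_success a cap a_gt0 _ _ _ (eps / alpha)) => //.
  by rewrite divr_gt0 //; lra.
rewrite -mulrA ler_pM2l // ler_pdivrMl; lra.
Qed.

Theorem theorem5p2 :
  forall K : nat, exists C : R, 0 < C /\
  forall (n : nat) (eps delta alpha : R),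
    (2 <= n)%N -> 0 < eps < 1 -> 0 < delta < 1 -> 1 <= alpha ->
    exists (k : nat) (A : stream_alg n k),
      valid_alg A /\
      log2 k%:R <= C * (log2 (alpha / eps) + log2 (1 / delta) + log2 (log2 n%:R) + 1) /\
      forall (m M : nat) (s : seq (update n)),
        size s = m ->
        (forall u, u \in s -> (`|u.2| <= M)%N) ->
        (m * M <= n ^ K)%N ->
        strict_turnstile s ->
        L1_alpha_property alpha s ->
        1 - delta <= success_prob A eps s.
Proof.
move=> K; exists (4 + 2 * log2 (16 * K.+1)%N%:R); split.
  by have := log2_ge0 _ (ler1n R (16 * K.+1)); lra.
move=> n eps delta alpha n_ge2 eps01 delta01 alpha_ge1.
have [r [r_gt0 r_le small_a]] := exists_counter_base _ _ _ eps01 delta01 alpha_ge1.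
exists _, (morris_pair_alg n r%:R^-1 (counter_cap K n r)); split.
  by apply: valid_morris_pair_alg; rewrite invr_gt0 ltr0n.
split; first exact: morris_pair_alg_space.
move=> m M s <- le_M le_mass Hst Halpha.
by apply: morris_pair_alg_correct le_M le_mass Hst Halpha; case/andP: eps01.
Qed.
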